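(* Let $G$ be a loopless multigraph, $k\ge1$, $M$ a maximal $k$-edge-colorable subgraph of $G$, $\psi$ a proper $k$-edge-coloring of $M$, and $y\in V(G)$ with $d_M(y)<k$. Then for all distinct $w,z \in N_M(y) \cup \{y\}$, we have $C(w) \cap C(z) = \emptyset$.
   Context: $\mu_G(v,w)$ (resp. $\mu_M(v,w)$) is the number of edges of $G$ (resp. $M$) joining $v,w$; $d_M(v)$ is the number of $M$-edges at $v$; $N_M(y)$ is the set of neighbors of $y$ in $M$. $F_k(y)=\{w\in N_G(y): d_M(w)\le k-\mu_G(y,w)\}$ and $U_k(y)=\{w\in F_k(y): \mu_M(y,w)<\mu_G(y,w)\}$. For distinct vertices $w,z$, $\psi(w,z)$ is the set of colors used by $\psi$ on edges of $M$ joining $w$ and $z$; $\psi(w)$ is the set of colors on $M$-edges incident to $w$; $O(w)=\{1,\dots,k\}\setminus\psi(w)$. For each $u\in U_k(y)$, $H_u$ is the multidigraph on vertex set $N_M(y)\cup\{u\}$ in which the number of arcs from $w$ to $z$ is $|O(w)\cap\psi(y,z)|$. A vertex $z\in N_M(y)$ is remote if for every $u\in U_k(y)$, $z$ is not reachable from $u$ by a directed path in $H_u$. For $w\in U_k(y)\cup N_M(y)\cup\{y\}$: $C(w)=\psi(y,w)$ if $w$ is remote, and $C(w)=O(w)$ otherwise (so $C(y)=O(y)$). *)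

From mathcomp Require Import all_boot.
Set Implicit Arguments. Unset Strict Implicit. Unset Printing Implicit Defensive.

(* A multigraph G: finite vertex type V, finite edge type E, each edge e
   joins the (unordered) pair of endpoints src e, tgt e.  All edges of E
   are edges of G.  Spanning subgraphs are given by edge sets {set E}.
   Colors are natural numbers 1..k. *)
Section Multigraph.
Variables (V E : finType) (src tgt : E -> V).

Definition loopless : Prop := forall e, src e != tgt e.

Definition joins (e : E) (v w : V) : bool :=
  ((src e == v) && (tgt e == w)) || ((src e == w) && (tgt e == v)).
Definition incident (e : E) (v : V) : bool := (src e == v) || (tgt e == v).
Definition adjacent_edges (e f : E) : bool :=
  [exists v, incident e v && incident f v].

Definition mu (F : {set E}) (v w : V) : nat := #|[set e in F | joins e v w]|.
Definition deg (F : {set E}) (v : V) : nat := #|[set e in F | incident e v]|.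
Definition nbhd (F : {set E}) (v : V) : {set V} :=
  [set w | [exists e in F, joins e v w]].

Definition proper_coloring (k : nat) (F : {set E}) (phi : E -> nat) : Prop :=
  (forall e, e \in F -> 0 < phi e <= k) /\
  (forall e f, e \in F -> f \in F -> e != f -> adjacent_edges e f ->
     phi e != phi f).
Definition k_edge_colorable (k : nat) (F : {set E}) : Prop :=
  exists phi, proper_coloring k F phi.
Definition maximal_k_colorable (k : nat) (M : {set E}) : Prop :=
  k_edge_colorable k M /\
  forall F : {set E}, M \proper F -> ~ k_edge_colorable k F.

Section Fan.
Variables (k : nat) (M : {set E}) (psi : E -> nat) (y : V).

Definition muG := mu [set: E].
Definition muM := mu M.
Definition dM := deg M.
Definition NG := nbhd [set: E].
Definition NM := nbhd M.

(* F_k(y): d_M(w) <= k - mu_G(y,w), stated over the integers *)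
Definition Fk : {set V} := [set w in NG y | dM w + muG y w <= k].
Definition Uk : {set V} := [set w in Fk | muM y w < muG y w].

Definition psi2 (w z : V) : pred nat :=
  fun c => [exists e in M, joins e w z && (psi e == c)].
Definition psi1 (w : V) : pred nat :=
  fun c => [exists e in M, incident e w && (psi e == c)].
Definition Omiss (w : V) : pred nat :=
  fun c => (0 < c <= k) && ~~ psi1 w c.

Definition Hverts (u : V) : {set V} := u |: NM y.
Definition Harc (u : V) : rel V :=
  fun w z => [&& w \in Hverts u, z \in Hverts u &
                has (fun c => Omiss w c && psi2 y z c) (iota 1 k)].

Definition remote (z : V) : bool :=
  (z \in NM y) && [forall u in Uk, ~~ connect (Harc u) u z].

Definition Ccol (w : V) : pred nat :=
  if remote w then psi2 y w else Omiss w.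

End Fan.
End Multigraph.

From mathcomp Require Import all_boot zify.
Set Implicit Arguments. Unset Strict Implicit. Unset Printing Implicit Defensive.

(* Vizing's fan argument gives the key fact: if z is reachable from some u in
   U_k(y) in H_u, then O(y) and O(z) are disjoint.  Along a shortest path
   u -> ... -> x -> z, a colour c missing at y and z can be given to the edge yz
   whose colour c' labels the last arc; then c' is missing at y and at x, and
   the path got shorter, until the uncoloured edge yu of G - M could be coloured
   c, against the maximality of M.
   Two reachable neighbours z1, z2 of y cannot miss a common colour a either:
   take a colour b missing at y.  If y were outside the a/b Kempe chain through
   z1, swapping a and b on that chain would make b missing at y and at a vertex
   still reachable from u, against the key fact.  So y, z1 and z2 all lie on
   one a/b chain and all have degree at most 1 in it, whereas a connected graph
   of maximum degree 2 has at most two such vertices.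
   Finally a colour of psi(y, a) missing at b is an arc b -> a of H_u, so a
   remote vertex a never shares a colour with a non-remote one, and two remote
   vertices cannot share one because psi is proper at y. *)

Lemma sum_pred_card (T : finType) (A : {set T}) (P : pred T) :
  \sum_(x in A) P x = #|[set x in A | P x]|.
Proof.
rewrite -sum1dep_card [RHS]big_mkcond [LHS]big_mkcond /=.
by apply: eq_bigr => x _; case: (x \in A); case: (P x).
Qed.

Section Multigraph.
Variables (V E : finType) (src tgt : E -> V).
Hypothesis loopless_G : loopless src tgt.

Local Notation joins := (joins src tgt).
Local Notation incident := (incident src tgt).
Local Notation deg := (deg src tgt).

Lemma joinsC e v w : joins e v w = joins e w v.
Proof. by rewrite /joins orbC. Qed.

Lemma joins_incident e v w : joins e v w -> incident e v && incident e w.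
Proof. by case/orP=> /andP[/eqP <- /eqP <-]; rewrite /incident !eqxx ?orbT. Qed.

Lemma incident_joins e v w x : joins e v w -> incident e x -> (x == v) || (x == w).
Proof.
by case/orP=> /andP[/eqP <- /eqP <-] /orP[] /eqP ->; rewrite eqxx ?orbT.
Qed.

Lemma joins_neq e v w : joins e v w -> v != w.
Proof.
have st := loopless_G e.
by case/orP=> /andP[/eqP <- /eqP <-]; rewrite // eq_sym.
Qed.

Lemma joins_inj e v w w' : joins e v w -> joins e v w' -> w = w'.
Proof.
move=> Jw Jw'; have /andP[_ wJw] := joins_incident Jw.
case/orP: (incident_joins Jw' wJw) => /eqP // wv.
by have := joins_neq Jw; rewrite wv eqxx.
Qed.

Lemma nbhd_neq F v w : w \in nbhd src tgt F v -> w != v.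
Proof. by rewrite inE eq_sym => /existsP[e /andP[_ /joins_neq]]. Qed.

Section EdgeComponents.
Variable A : {set E}.

Definition edge_rel : rel V := fun a b => [exists e in A, joins e a b].

Definition component x0 : {set V} := [set x | connect edge_rel x0 x].

Lemma edge_rel_sym : connect_sym edge_rel.
Proof.
by apply: sym_connect_sym => a b; apply: eq_existsb => e; rewrite joinsC.
Qed.

Lemma mem_component x0 : x0 \in component x0.
Proof. by rewrite inE connect0. Qed.

Lemma component_sym x0 x : (x \in component x0) = (x0 \in component x).
Proof. by rewrite !inE edge_rel_sym. Qed.

Lemma component_trans x0 a b :
  a \in component x0 -> edge_rel a b -> b \in component x0.
Proof. by rewrite !inE => x0a /connect1; apply: connect_trans. Qed.

Lemma component_incident x0 e v :
  e \in A -> incident e v -> (v \in component x0) = (src e \in component x0).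
Proof.
move=> eA; have st : edge_rel (src e) (tgt e).
  by apply/exists_inP; exists e; rewrite // /joins !eqxx.
have ts : edge_rel (tgt e) (src e).
  by rewrite /edge_rel; under eq_existsb do rewrite joinsC.
by case/orP=> /eqP <- //; apply/idP/idP => /component_trans; apply.
Qed.

Lemma component_boundary x0 (S : {set V}) :
  x0 \in S -> ~~ (component x0 \subset S) ->
  exists a b, [/\ a \in S, b \notin S & edge_rel a b].
Proof.
move=> x0S /subsetPn[x]; rewrite inE => x0x xS.
case: (boolP [exists a, exists b, [&& a \in S, b \notin S & edge_rel a b]]).
  by case/existsP=> a /existsP[b /and3P[]]; exists a, b.
move/existsPn=> noexit; have clS : closed edge_rel S.
  apply: intro_closed; first exact: edge_rel_sym.
  move=> a b ab aS; apply: contraT => bS.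
  by have /existsPn/(_ b) := noexit a; rewrite aS bS ab.
by rewrite -(closed_connect clS x0x) x0S in xS.
Qed.

Lemma card_component x0 :
  #|component x0| <= #|[set e in A | src e \in component x0]| + 1.
Proof.
set K := component x0.
pose inner (S : {set V}) := [set e in A | (src e \in S) && (tgt e \in S)].
suff grow (S : {set V}) : x0 \in S -> S \subset K -> #|S| <= #|inner S| + 1 ->
    #|K| <= #|inner K| + 1.
  apply: leq_trans (grow [set x0] _ _ _) _.
  - by rewrite set11.
  - by rewrite sub1set mem_component.
  - by rewrite cards1 leq_addl.
  rewrite leq_add2r; apply: subset_leq_card; apply/subsetP => e.
  by rewrite !inE => /andP[-> /andP[-> _]].
have [n] := ubnP #|K :\: S|; elim: n S => // n IHn S ltSn x0S SK cardS.
have [KS | /(component_boundary x0S)[a [b [aS bS ab]]]] := boolP (K \subset S).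
  by have -> : K = S by apply/eqP; rewrite eqEsubset KS SK.
have bK : b \in K by apply: component_trans ab; apply: (subsetP SK).
have [e eA Je] := exists_inP ab.
apply: (IHn (b |: S)).
- rewrite -ltnS (leq_trans _ ltSn) // ltnS; apply: proper_card; apply/properP; split.
    by apply: setDS; apply: subsetUr.
  by exists b; rewrite !in_setD ?in_setU1 ?eqxx ?bS ?bK.
- by rewrite in_setU1 x0S orbT.
- by rewrite subUset sub1set bK.
have : #|inner S| < #|inner (b |: S)|.
  apply: proper_card; apply/properP; split.
    by apply/subsetP => f; rewrite !inE => /andP[-> /andP[-> ->]]; rewrite !orbT.
  exists e; rewrite inE eA /=.
    by case/orP: Je => /andP[/eqP-> /eqP->]; rewrite !in_setU1 eqxx aS !orbT.
  by case/orP: Je => /andP[/eqP-> /eqP->]; rewrite (negbTE bS) ?andbF.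
rewrite cardsU1 bS; lia.
Qed.

Lemma sum_deg_component x0 :
  \sum_(v in component x0) deg A v = #|[set e in A | src e \in component x0]| * 2.
Proof.
set K := component x0.
under eq_bigr => v _ do rewrite /deg -sum_pred_card.
rewrite exchange_big -sum_pred_card big_distrl /=; apply: eq_bigr => e eA.
case sK: (src e \in K); last first.
  apply: big1 => v vK; apply/eqP; rewrite eqb0.
  by apply: contraFN sK => /(component_incident x0 eA) <-.
have tK : tgt e \in K by rewrite (component_incident x0 eA) // /incident eqxx orbT.
rewrite sum_pred_card; have -> : [set v in K | incident e v] = [set src e; tgt e].
  apply/setP => v; rewrite in_set in_set2 /incident (eq_sym (src e)) (eq_sym (tgt e)).
  case: (eqVneq v (src e)) => [->|ns]; first by rewrite sK.
  case: (eqVneq v (tgt e)) => [->|nt]; first by rewrite tK orbT.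
  by rewrite andbF.
by rewrite cards2 loopless_G.
Qed.

Lemma card_low_degree_component x0 (S : {set V}) :
  S \subset component x0 ->
  {in component x0, forall v, deg A v <= 2} ->
  {in S, forall v, deg A v <= 1} -> #|S| <= 2.
Proof.
set K := component x0 => SK deg2 deg1.
have := card_component x0; have := sum_deg_component x0.
rewrite -/K (big_setID S) /= (setIidPr SK).
have le1 : \sum_(v in S) deg A v <= #|S|.
  by rewrite -sum1_card; apply: leq_sum => v /deg1.
have le2 : \sum_(v in K :\: S) deg A v <= #|K :\: S| * 2.
  by rewrite -sum1_card big_distrl; apply: leq_sum => v /setDP[/deg2 + _].
have := subset_leq_card SK; rewrite cardsDS // in le2; lia.
Qed.

End EdgeComponents.

Section Colorings.
Variables (k : nat) (M : {set E}).

Local Notation proper := (proper_coloring src tgt k M).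
Local Notation psi1 := (psi1 src tgt M).
Local Notation psi2 := (psi2 src tgt M).
Local Notation Omiss := (Omiss src tgt k M).

Lemma proper_coloring_inj psi e f v :
  proper psi -> e \in M -> f \in M -> incident e v -> incident f v ->
  psi e = psi f -> e = f.
Proof.
move=> [_ Ppsi] eM fM ev fv; apply: contra_eq => ef.
by apply: Ppsi => //; apply/existsP; exists v; rewrite ev fv.
Qed.

Lemma psi2_psi1 psi a b c : psi2 psi a b c -> psi1 psi a c.
Proof.
case/exists_inP=> e eM /andP[Je ec]; apply/exists_inP; exists e => //.
by rewrite ec andbT; case/andP: (joins_incident Je).
Qed.

Lemma psi2_inj psi a b b' c :
  proper psi -> psi2 psi a b c -> psi2 psi a b' c -> b = b'.
Proof.
move=> Ppsi /exists_inP[e eM /andP[Je /eqP ec]] /exists_inP[f fM /andP[Jf /eqP fc]].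
have [ea _] := andP (joins_incident Je); have [fa _] := andP (joins_incident Jf).
have ef : e = f by apply: (proper_coloring_inj Ppsi eM fM ea fa); rewrite ec fc.
by rewrite ef in Je; apply: joins_inj Je Jf.
Qed.

Lemma exists_Omiss psi v : deg M v < k -> exists c, Omiss psi v c.
Proof.
move=> ltvk; have [/hasP[c + nc] | /hasPn noOmiss] :=
  boolP (has (fun c => ~~ psi1 psi v c) (iota 1 k)).
  by rewrite mem_iota add1n ltnS => ck; exists c; rewrite /Omiss ck.
have sub : {subset iota 1 k <= [seq psi e | e in [set e in M | incident e v]]}.
  move=> c /noOmiss; rewrite negbK => /exists_inP[e eM /andP[ev /eqP <-]].
  by apply: map_f; rewrite mem_enum inE eM.
have := uniq_leq_size (iota_uniq 1 k) sub.
by rewrite size_iota size_map -cardE leqNgt ltvk.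
Qed.

Lemma adjacent_edgesC e f : adjacent_edges src tgt e f = adjacent_edges src tgt f e.
Proof. by apply: eq_existsb => v; rewrite andbC. Qed.

Definition recolor (psi : E -> nat) (e0 : E) (c : nat) : E -> nat :=
  fun e => if e == e0 then c else psi e.

Lemma proper_recolor psi e0 a b c :
  proper psi -> joins e0 a b -> Omiss psi a c -> Omiss psi b c ->
  proper_coloring src tgt k (e0 |: M) (recolor psi e0 c).
Proof.
move=> [psi_range psi_adj] J /andP[ck /exists_inPn Na] /andP[_ /exists_inPn Nb].
have fresh f : f \in M -> adjacent_edges src tgt e0 f -> psi f != c.
  move=> fM /existsP[v /andP[e0v fv]].
  by case/orP: (incident_joins J e0v) => /eqP vab; [have := Na f fM | have := Nb f fM];
    rewrite -vab fv.
split=> [e | e f]; rewrite ?in_setU1 /recolor.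
  by case: eqVneq => [_ _ | _ /= eM]; [exact: ck | exact: psi_range].
case: (eqVneq e e0) => [-> _ | _ /= eM]; case: (eqVneq f e0) => [-> _ | _ /= fM] ef adj.
- by [].
- by rewrite eq_sym fresh.
- by rewrite fresh // adjacent_edgesC.
- exact: psi_adj.
Qed.

Lemma maximal_no_common_Omiss psi e0 a b c :
  maximal_k_colorable src tgt k M -> proper psi -> e0 \notin M -> joins e0 a b ->
  Omiss psi a c -> Omiss psi b c -> False.
Proof.
move=> [_ maxM] Ppsi e0M J Oa Ob; apply: (maxM (e0 |: M)).
  by rewrite properUr // sub1set.
by exists (recolor psi e0 c); apply: proper_recolor J Oa Ob.
Qed.

Lemma psi1_recolor psi e0 c v :
  ~~ incident e0 v -> psi1 (recolor psi e0 c) v =1 psi1 psi v.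
Proof.
move=> e0v d; apply: eq_existsb => f; rewrite /recolor.
by case: (eqVneq f e0) => [->|//]; rewrite (negbTE e0v) !andbF.
Qed.

Lemma psi2_recolor psi e0 c a b b' :
  joins e0 a b -> b' != b -> psi2 (recolor psi e0 c) a b' =1 psi2 psi a b'.
Proof.
move=> J b'b d; apply: eq_existsb => f; rewrite /recolor.
case: (eqVneq f e0) => [->|//]; case J': (joins e0 a b'); rewrite ?andbF //.
by rewrite (joins_inj J J') eqxx in b'b.
Qed.

Definition swap_color (al be c : nat) : nat :=
  if c == al then be else if c == be then al else c.

Lemma swap_colorK al be : involutive (swap_color al be).
Proof.
move=> c; rewrite /swap_color.
have [->|cal] := eqVneq c al; first by rewrite eqxx; case: eqVneq => [->|_]; rewrite ?eqxx.
have [->|cbe] := eqVneq c be; first by rewrite eqxx.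
by rewrite (negbTE cal) (negbTE cbe).
Qed.

Lemma swap_color_id al be c : c != al -> c != be -> swap_color al be c = c.
Proof. by rewrite /swap_color => /negbTE-> /negbTE->. Qed.

Lemma swap_color_r al be : swap_color al be be = al.
Proof. by rewrite /swap_color eqxx; case: eqVneq. Qed.

Definition kempe_edges (psi : E -> nat) (al be : nat) : {set E} :=
  [set e in M | (psi e == al) || (psi e == be)].

Definition kempe_chain (psi : E -> nat) (al be : nat) (x0 : V) : {set V} :=
  component (kempe_edges psi al be) x0.

(* Swapping on every M-edge whose source lies in the chain, not only on the
   chain's own edges, is harmless: [swap_color] fixes all colours but [al] and
   [be]. *)
Definition kempe_swap (psi : E -> nat) (al be : nat) (x0 : V) : E -> nat :=
  fun e => if (e \in M) && (src e \in kempe_chain psi al be x0)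
           then swap_color al be (psi e) else psi e.

Lemma kempe_swap_incident psi al be x0 e v :
  e \in M -> incident e v ->
  kempe_swap psi al be x0 e =
    if v \in kempe_chain psi al be x0 then swap_color al be (psi e) else psi e.
Proof.
move=> eM ev; rewrite /kempe_swap eM /=.
have [eK | eK] := boolP (e \in kempe_edges psi al be).
  by rewrite /kempe_chain (component_incident x0 eK ev).
have /norP[nal nbe] : ~~ ((psi e == al) || (psi e == be)) by move: eK; rewrite inE eM.
by rewrite swap_color_id //; case: ifP; case: ifP.
Qed.

Lemma proper_kempe_swap psi al be x0 :
  proper psi -> 0 < al <= k -> 0 < be <= k -> proper (kempe_swap psi al be x0).
Proof.
move=> [psi_range psi_adj] alk bek; split=> [e eM | e f eM fM ef adj].
  rewrite /kempe_swap eM /swap_color.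
  by case: ifP => _; [case: ifP => _ //; case: ifP|]; rewrite // psi_range.
have /existsP[v /andP[ev fv]] := adj.
rewrite (kempe_swap_incident _ _ _ _ eM ev) (kempe_swap_incident _ _ _ _ fM fv).
by case: ifP => _; rewrite ?(inj_eq (can_inj (swap_colorK al be))); apply: psi_adj.
Qed.

Lemma psi1_kempe_swap psi al be x0 v c :
  psi1 (kempe_swap psi al be x0) v c =
    psi1 psi v (if v \in kempe_chain psi al be x0 then swap_color al be c else c).
Proof.
apply: eq_existsb => f; case fM: (f \in M) => //=; case fv: (incident f v) => //=.
rewrite (kempe_swap_incident _ _ _ _ fM fv); case: ifP => // _.
by rewrite (can2_eq (swap_colorK al be) (swap_colorK al be)).
Qed.

Lemma psi2_kempe_swap psi al be x0 a b c :
  psi2 (kempe_swap psi al be x0) a b c =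
    psi2 psi a b (if a \in kempe_chain psi al be x0 then swap_color al be c else c).
Proof.
apply: eq_existsb => f; case fM: (f \in M) => //=; case J: (joins f a b) => //=.
have /andP[fa _] := joins_incident J.
rewrite (kempe_swap_incident _ _ _ _ fM fa); case: ifP => // _.
by rewrite (can2_eq (swap_colorK al be) (swap_colorK al be)).
Qed.

Lemma deg_kempe_edges psi al be v :
  proper psi -> deg (kempe_edges psi al be) v <= psi1 psi v al + psi1 psi v be.
Proof.
move=> Ppsi; pose class c := [set e in M | (psi e == c) && incident e v].
have class_le c : #|class c| <= psi1 psi v c.
  have [_ | /exists_inPn noc] := boolP (psi1 psi v c).
    apply/card_le1_eqP => e f; rewrite !inE => /and3P[eM /eqP ec ev] /and3P[fM /eqP fc fv].
    by apply: (proper_coloring_inj Ppsi fM eM fv ev); rewrite ec fc.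
  rewrite leqn0 cards_eq0; apply/eqP/setP => e; rewrite !inE.
  by apply/negP => /and3P[eM ec ev]; have := noc e eM; rewrite ev ec.
apply: leq_trans (leq_add (class_le al) (class_le be)).
apply: leq_trans (leq_card_setU _ _).1; apply: subset_leq_card; apply/subsetP => e.
by rewrite !inE; case: (e \in M); case: (psi e == al); case: (psi e == be); case: incident.
Qed.

Section Fan.
Variable y : V.
Hypothesis maximal_M : maximal_k_colorable src tgt k M.

Local Notation Uk := (Uk src tgt k M y).
Local Notation Harc psi u := (Harc src tgt k M psi y u).

Lemma Hverts_neq u x : u \in Uk -> x \in Hverts src tgt M y u -> x != y.
Proof.
move=> uU; rewrite /Hverts in_setU1 => /orP[/eqP-> | /nbhd_neq //].
by case/setIdP: uU => /setIdP[/nbhd_neq].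
Qed.

Lemma Uk_free_edge u : u \in Uk -> exists2 e, e \notin M & joins e y u.
Proof.
rewrite !inE => /andP[_ ltMG].
have /subsetPn[e] : ~~ ([set e in [set: E] | joins e y u] \subset [set e in M | joins e y u]).
  by apply: contraL ltMG => /subset_leq_card; rewrite leqNgt.
by rewrite !inE /= => Je; rewrite Je andbT => eM; exists e.
Qed.

Lemma Harc_recolor psi u em z c a b :
  u \in Uk -> joins em y z -> a != z -> b != z ->
  Harc psi u a b -> Harc (recolor psi em c) u a b.
Proof.
move=> uU J az bz /and3P[aH bH /hasP[d dk /andP[Oa Pb]]].
apply/and3P; split => //; apply/hasP; exists d => //.
have em_a : ~~ incident em a.
  apply/negP => /(incident_joins J)/orP[]/eqP ae.
    by have := Hverts_neq uU aH; rewrite ae eqxx.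
  by rewrite ae eqxx in az.
by rewrite /Omiss psi1_recolor // (psi2_recolor _ _ J) // Pb andbT.
Qed.

Lemma Harc_path_no_common_Omiss psi u p c :
  u \in Uk -> proper psi -> path (Harc psi u) u p -> uniq (u :: p) ->
  Omiss psi y c -> Omiss psi (last u p) c -> False.
Proof.
move=> uU; elim/last_ind: p psi c => [|q z IHq] psi c Ppsi.
  move=> _ _ Oy Ou; have [e0 e0M J] := Uk_free_edge uU.
  exact: maximal_no_common_Omiss maximal_M Ppsi e0M J Oy Ou.
rewrite rcons_path -rcons_cons rcons_uniq last_rcons.
move=> /andP[Hq /and3P[xH _ /hasP[c' _ /andP[Ox Pc']]]] /andP[zq uq] Oy Oz.
have /exists_inP[em emM /andP[Jem /eqP emc']] := Pc'.
set x := last u q in xH Ox.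
have [em_y _] := andP (joins_incident Jem).
have Ppsi' : proper (recolor psi em c).
  have := proper_recolor Ppsi Jem Oy Oz.
  by have -> : em |: M = M by apply/setUidPr; rewrite sub1set.
have yc' : psi1 psi y c' by apply/exists_inP; exists em; rewrite // em_y emc' /=.
have cc' : c != c' by apply: contraTneq Oy => ->; rewrite /Omiss yc' andbF.
have em_x : ~~ incident em x.
  apply/negP => /(incident_joins Jem)/orP[]/eqP xe.
    by have := Hverts_neq uU xH; rewrite xe eqxx.
  by rewrite -xe mem_last in zq.
apply: (IHq (recolor psi em c) c' Ppsi' _ uq).
- apply: (sub_in_path (P := mem (u :: q))) Hq; last exact/allP.
  by move=> a b aq bq; apply: Harc_recolor uU Jem _ _; apply: contraNneq zq => <-.
- rewrite /Omiss (andP Ox).1; apply/exists_inP => -[f fM /andP[fy]].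
  rewrite /recolor; case: (eqVneq f em) => [_ /eqP cc | fem /eqP fc'].
    by rewrite cc eqxx in cc'.
  by move/eqP: fem; apply; apply: (proper_coloring_inj Ppsi fM emM fy em_y); rewrite fc' emc'.
- by rewrite /Omiss psi1_recolor.
Qed.

Lemma fan_no_common_Omiss psi u z c :
  u \in Uk -> proper psi -> connect (Harc psi u) u z ->
  Omiss psi y c -> Omiss psi z c -> False.
Proof.
move=> uU Ppsi /connectP[p Hp ->]; case: (shortenP Hp) => p' Hp' up' _.
exact: Harc_path_no_common_Omiss.
Qed.

(* Walking back along the path, the first arc broken by the swap has colour
   [al] and leaves the chain, so its tail misses [be] after the swap. *)
Lemma Harc_path_kempe_swap psi u al be x0 s p :
  y \notin kempe_chain psi al be x0 -> Omiss psi y be ->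
  path (Harc psi u) s p -> Omiss (kempe_swap psi al be x0) (last s p) be ->
  exists2 a, connect (Harc (kempe_swap psi al be x0) u) s a
           & Omiss (kempe_swap psi al be x0) a be.
Proof.
set K := kempe_chain psi al be x0 => yK Oy.
elim: p s => [|b q IHq] s /=; first by move=> _ Os; exists s.
move=> /andP[/and3P[sH bH /hasP[c ck /andP[Os Pb]]] Hq] /(IHq b Hq)[a ba Oa].
have cbe : c != be by apply: contraTneq (psi2_psi1 Pb) => ->; case/andP: Oy.
have [/andP[/eqP cal sK] | noswap] := boolP ((c == al) && (s \in K)).
  exists s => //; rewrite /Omiss psi1_kempe_swap -/K sK swap_color_r (andP Oy).1.
  by rewrite -cal; case/andP: Os.
exists a => //; apply: connect_trans ba; apply: connect1.
apply/and3P; split => //; apply/hasP; exists c => //.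
rewrite /Omiss psi1_kempe_swap psi2_kempe_swap -/K (negbTE yK) Pb andbT.
case: ifP => sK //; rewrite swap_color_id //.
by move: noswap; rewrite sK andbT.
Qed.

Lemma fan_kempe_chain psi u z al be :
  u \in Uk -> proper psi -> connect (Harc psi u) u z ->
  Omiss psi y be -> Omiss psi z al -> y \in kempe_chain psi al be z.
Proof.
move=> uU Ppsi /connectP[p Hp zE] Oy Oz; apply: contraT => yK.
set psi' := kempe_swap psi al be z.
have Ppsi' : proper psi' := proper_kempe_swap z Ppsi (andP Oz).1 (andP Oy).1.
have Oy' : Omiss psi' y be by rewrite /Omiss psi1_kempe_swap (negbTE yK).
have Oz' : Omiss psi' (last u p) be.
  rewrite -zE /Omiss psi1_kempe_swap /kempe_chain mem_component swap_color_r.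
  by rewrite (andP Oy).1; case/andP: Oz.
have [a ua Oa] := Harc_path_kempe_swap yK Oy Hp Oz'.
by case: (fan_no_common_Omiss uU Ppsi' ua Oy' Oa).
Qed.

Lemma reachable_no_common_Omiss psi u1 u2 z1 z2 al :
  proper psi -> deg M y < k -> u1 \in Uk -> u2 \in Uk ->
  connect (Harc psi u1) u1 z1 -> connect (Harc psi u2) u2 z2 ->
  z1 != z2 -> z1 != y -> z2 != y ->
  Omiss psi z1 al -> Omiss psi z2 al -> False.
Proof.
move=> Ppsi ltyk u1U u2U uz1 uz2 z12 z1y z2y O1 O2.
have [be Oy] := exists_Omiss psi ltyk.
have chain1 := fan_kempe_chain u1U Ppsi uz1 Oy O1.
have chain2 := fan_kempe_chain u2U Ppsi uz2 Oy O2.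
have sub : [set y; z1; z2] \subset kempe_chain psi al be y.
  apply/subsetP => v; rewrite in_setU in_setU1 !in_set1 /kempe_chain.
  by case/orP=> [/orP[]|] /eqP->; rewrite ?mem_component // component_sym.
have deg2 : {in kempe_chain psi al be y, forall v, deg (kempe_edges psi al be) v <= 2}.
  move=> v _; apply: leq_trans (deg_kempe_edges al be v Ppsi) _.
  by case: psi1; case: psi1.
have deg1 : {in [set y; z1; z2], forall v, deg (kempe_edges psi al be) v <= 1}.
  move=> v; rewrite in_setU in_setU1 !in_set1 => /orP[/orP[]|] /eqP->;
    apply: leq_trans (deg_kempe_edges al be _ Ppsi) _.
  + by move: Oy => /andP[_ /negbTE->]; rewrite addn0 leq_b1.
  + by move: O1 => /andP[_ /negbTE->]; rewrite leq_b1.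
  + by move: O2 => /andP[_ /negbTE->]; rewrite leq_b1.
have := card_low_degree_component sub deg2 deg1.
by rewrite -setUA !cardsU1 cards1 !inE negb_or ![y == _]eq_sym z1y z2y z12.
Qed.

Lemma not_remote_reachable psi x :
  x \in NM src tgt M y -> ~~ remote src tgt k M psi y x ->
  exists2 u, u \in Uk & connect (Harc psi u) u x.
Proof. by rewrite /remote => -> /forall_inPn[u uU /negbNE]; exists u. Qed.

Lemma remote_Omiss_disjoint psi a b c :
  remote src tgt k M psi y a -> b \in y |: NM src tgt M y ->
  ~~ remote src tgt k M psi y b -> psi2 psi y a c -> Omiss psi b c -> False.
Proof.
move=> ra; rewrite in_setU1 => /orP[/eqP-> _ /psi2_psi1 yc /andP[_] | bN nrb Pa Ob].
  by rewrite yc.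
have [u uU ub] := not_remote_reachable bN nrb.
case/andP: ra => aN /forall_inP/(_ u uU)/negP; apply.
apply: connect_trans ub (connect1 _); apply/and3P; split.
- by rewrite /Hverts in_setU1 bN orbT.
- by rewrite /Hverts in_setU1 aN orbT.
apply/hasP; exists c; last by rewrite Ob Pa.
by rewrite mem_iota add1n ltnS (andP Ob).1.
Qed.

Lemma not_remote_Omiss_disjoint psi w z c :
  proper psi -> deg M y < k ->
  w \in y |: NM src tgt M y -> z \in y |: NM src tgt M y -> w != z ->
  ~~ remote src tgt k M psi y w -> ~~ remote src tgt k M psi y z ->
  Omiss psi w c -> Omiss psi z c -> False.
Proof.
move=> Ppsi ltyk; rewrite !in_setU1 => /orP[/eqP-> | wN] /orP[/eqP-> | zN] wz nrw nrz Ow Oz.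
- by rewrite eqxx in wz.
- have [u uU uz] := not_remote_reachable zN nrz.
  exact: fan_no_common_Omiss uU Ppsi uz Ow Oz.
- have [u uU uw] := not_remote_reachable wN nrw.
  exact: fan_no_common_Omiss uU Ppsi uw Oz Ow.
have [u1 u1U uw] := not_remote_reachable wN nrw.
have [u2 u2U uz] := not_remote_reachable zN nrz.
exact: reachable_no_common_Omiss Ppsi ltyk u1U u2U uw uz wz (nbhd_neq wN) (nbhd_neq zN) Ow Oz.
Qed.

End Fan.
End Colorings.
End Multigraph.

Theorem mainTheorem4 (V E : finType) (src tgt : E -> V)
  (k : nat) (M : {set E}) (psi : E -> nat) (y : V) :
  loopless src tgt ->
  1 <= k ->
  maximal_k_colorable src tgt k M ->
  proper_coloring src tgt k M psi ->
  dM src tgt M y < k ->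
  forall w z : V,
    w \in y |: NM src tgt M y -> z \in y |: NM src tgt M y -> w != z ->
    forall c : nat,
      ~~ (Ccol src tgt k M psi y w c && Ccol src tgt k M psi y z c).
Proof.
(* [1 <= k] is implied by [dM y < k]. *)
move=> ll _ maxM Ppsi ltyk w z wN zN wz c; apply/negP => /andP[].
rewrite /Ccol; case: ifP => rw; case: ifP => rz Cw Cz.
- by rewrite (psi2_inj ll Ppsi Cw Cz) eqxx in wz.
- exact: remote_Omiss_disjoint rw zN (negbT rz) Cw Cz.
- exact: remote_Omiss_disjoint rz wN (negbT rw) Cz Cw.
- exact: (not_remote_Omiss_disjoint ll maxM Ppsi ltyk wN zN wz (negbT rw) (negbT rz) Cw Cz).
Qed.
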